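(* For all $R>0$ and $0<\nu<1/R$, and all integers $0\le k\le N$, $$\int_0^\nu rJ_k(rR)^2dr\ge\frac{9\nu^2}{32}\cdot\frac{(\nu R)^{2N}}{(N+1)2^{2N}(N!)^2}.$$
   Context: $J_k$ is the Bessel function of the first kind of integer order $k\ge0$, $J_k(z)=\sum_{m=0}^\infty(-1)^m\frac{(z/2)^{k+2m}}{m!\,(k+m)!}$. *)

From Stdlib Require Import Reals Factorial.
From Coquelicot Require Import Coquelicot.
Open Scope R_scope.

Definition besselJ (k : nat) (z : R) : R :=
  Series (fun m : nat =>
    (-1) ^ m * (z / 2) ^ (k + 2 * m) / (INR (fact m) * INR (fact (k + m)))).

(** For [0 <= z < 2] the series of [J_k z] is alternating with terms decreasing
    at least geometrically (ratio [(z/2)^2]), so [J_k z] is bounded below by its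
    first two terms, hence by [(1 - (z/2)^2) (z/2)^k / k!].  With [z = r R <= 1]
    this gives [r J_k(rR)^2 >= 9/16 (R/2)^(2k) r^(2k+1) / (k!)^2], whose integral
    over [[0, nu]] is [9 nu^2/32] times the [k]-th member of the sequence
    [t^(2n) / ((n+1) 2^(2n) (n!)^2)] at [t = nu R]; that sequence is
    nonincreasing in [n] for [0 <= t <= 2], which handles [k <= N]. *)

From Stdlib Require Import Reals Factorial Lia Lra.
From Coquelicot Require Import Coquelicot.
Open Scope R_scope.

Definition bessel_term (k : nat) (z : R) (m : nat) : R :=
  (z / 2) ^ (k + 2 * m) / (INR (fact m) * INR (fact (k + m))).

Lemma bessel_term_ge0 k z m : 0 <= z -> 0 <= bessel_term k z m.
Proof.
  intros Hz. apply Rdiv_le_0_compat.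
  - apply pow_le; lra.
  - apply Rmult_lt_0_compat; apply INR_fact_lt_0.
Qed.

Lemma bessel_term_0 k z : bessel_term k z 0 = (z / 2) ^ k / INR (fact k).
Proof.
  unfold bessel_term. rewrite Nat.mul_0_r, !Nat.add_0_r.
  simpl (INR (fact 0)). now rewrite Rmult_1_l.
Qed.

Lemma bessel_term_S k z m :
  bessel_term k z (S m) =
  bessel_term k z m * ((z / 2) ^ 2 / (INR (S m) * INR (S (k + m)))).
Proof.
  unfold bessel_term.
  replace (k + 2 * S m)%nat with (k + 2 * m + 2)%nat by lia.
  replace (k + S m)%nat with (S (k + m)) by lia.
  rewrite pow_add, !fact_simpl, !mult_INR.
  field. repeat split; try apply INR_fact_neq_0; apply not_0_INR; lia.
Qed.

Lemma bessel_term_S_le k z m :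
  0 <= z -> bessel_term k z (S m) <= (z / 2) ^ 2 * bessel_term k z m.
Proof.
  intros Hz. rewrite bessel_term_S, (Rmult_comm ((z / 2) ^ 2)).
  apply Rmult_le_compat_l; [now apply bessel_term_ge0|].
  assert (H1 : 1 <= INR (S m)) by (apply (le_INR 1); lia).
  assert (H2 : 1 <= INR (S (k + m))) by (apply (le_INR 1); lia).
  unfold Rdiv. rewrite <- (Rmult_1_r ((z / 2) ^ 2)) at 2.
  apply Rmult_le_compat_l; [apply pow2_ge_0|].
  rewrite <- Rinv_1. apply Rinv_le_contravar; nra.
Qed.

Lemma bessel_term_le_geom k z m :
  0 <= z -> bessel_term k z m <= bessel_term k z 0 * ((z / 2) ^ 2) ^ m.
Proof.
  intros Hz. induction m as [|m IH]; [simpl; lra|].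
  eapply Rle_trans; [now apply bessel_term_S_le|].
  rewrite <- (tech_pow_Rmult ((z / 2) ^ 2) m).
  replace (bessel_term k z 0 * ((z / 2) ^ 2 * ((z / 2) ^ 2) ^ m))
    with ((z / 2) ^ 2 * (bessel_term k z 0 * ((z / 2) ^ 2) ^ m)) by ring.
  apply Rmult_le_compat_l; [apply pow2_ge_0|exact IH].
Qed.

Lemma besselJ_ge_two_terms k z :
  0 <= z < 2 -> bessel_term k z 0 - bessel_term k z 1 <= besselJ k z.
Proof.
  intros Hz.
  assert (Hq : 0 <= (z / 2) ^ 2 < 1) by (simpl; nra).
  assert (dec : Un_decreasing (bessel_term k z)).
  { intro m. eapply Rle_trans; [apply bessel_term_S_le; lra|].
    pose proof (bessel_term_ge0 k z m (proj1 Hz)). nra. }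
  assert (cv : Un_cv (bessel_term k z) 0).
  { apply is_lim_seq_Reals.
    apply is_lim_seq_le_le with (u := fun _ => 0)
      (w := fun m => bessel_term k z 0 * ((z / 2) ^ 2) ^ m).
    - intro m. split; [apply bessel_term_ge0|apply bessel_term_le_geom]; lra.
    - apply is_lim_seq_const.
    - replace (Finite 0) with (Rbar_mult (bessel_term k z 0) 0)
        by (simpl; f_equal; ring).
      apply is_lim_seq_scal_l, is_lim_seq_geom. rewrite Rabs_pos_eq; lra. }
  destruct (alternated_series _ dec cv) as [l Hl].
  replace (besselJ k z) with l.
  - destruct (alternated_series_ineq _ _ 0 dec cv Hl) as [Hlow _].
    simpl in Hlow. unfold tg_alt in Hlow. simpl in Hlow. lra.
  - symmetry. apply is_series_unique.
    apply is_lim_seq_Reals in Hl.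
    eapply filterlim_ext; [|exact Hl].
    intro n. rewrite sum_n_Reals. apply sum_eq. intros i _.
    unfold tg_alt, bessel_term, Rdiv. ring.
Qed.

Lemma besselJ_ge_leading k z :
  0 <= z < 2 -> (1 - (z / 2) ^ 2) * ((z / 2) ^ k / INR (fact k)) <= besselJ k z.
Proof.
  intros Hz. rewrite <- bessel_term_0.
  pose proof (bessel_term_S_le k z 0 (proj1 Hz)).
  pose proof (besselJ_ge_two_terms k z Hz). nra.
Qed.

Definition bessel_coef (k m : nat) : R :=
  (-1) ^ m / (INR (fact m) * INR (fact (k + m))).

Lemma besselJ_PSeries k z :
  besselJ k z = (z / 2) ^ k * PSeries (bessel_coef k) ((z / 2) ^ 2).
Proof.
  unfold besselJ, PSeries. rewrite <- Series_scal_l. apply Series_ext. intro m.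
  unfold bessel_coef. rewrite pow_add, pow_mult. unfold Rdiv. ring.
Qed.

Lemma Rabs_bessel_coef_le_1 k m : Rabs (bessel_coef k m) <= 1.
Proof.
  unfold bessel_coef, Rdiv.
  assert (H1 : 1 <= INR (fact m)) by (apply (le_INR 1), lt_O_fact).
  assert (H2 : 1 <= INR (fact (k + m))) by (apply (le_INR 1), lt_O_fact).
  rewrite Rabs_mult, pow_1_abs, Rmult_1_l, Rabs_inv, Rabs_pos_eq by nra.
  rewrite <- Rinv_1. apply Rinv_le_contravar; nra.
Qed.

Lemma CV_radius_bessel_coef_ge_1 k : Rbar_le 1 (CV_radius (bessel_coef k)).
Proof.
  apply (proj1 (CV_radius_bounded (bessel_coef k))).
  exists 1. intro n. rewrite pow1, Rmult_1_r. apply Rabs_bessel_coef_le_1.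
Qed.

Lemma ex_derive_besselJ k z : Rabs z < 2 -> ex_derive (besselJ k) z.
Proof.
  intros Hz.
  apply (ex_derive_ext (fun z => (z / 2) ^ k * PSeries (bessel_coef k) ((z / 2) ^ 2))).
  { intro t. symmetry. apply besselJ_PSeries. }
  auto_derive.
  apply ex_derive_PSeries, Rbar_lt_le_trans with 1;
    [|apply CV_radius_bessel_coef_ge_1].
  simpl. rewrite Rmult_1_r, Rabs_mult, Rabs_mult, (Rabs_pos_eq (/ 2)) by lra.
  pose proof (Rabs_pos z). nra.
Qed.

Lemma ex_RInt_weighted_besselJ_sq k Rr nu :
  0 <= Rr -> 0 <= nu -> nu * Rr < 2 ->
  ex_RInt (fun r => r * besselJ k (r * Rr) ^ 2) 0 nu.
Proof.
  intros HR Hnu HnR.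
  apply (ex_RInt_continuous (V := R_CompleteNormedModule)). intros r Hr.
  rewrite Rmin_left, Rmax_right in Hr by lra.
  apply (ex_derive_continuous (K := R_AbsRing) (V := R_NormedModule)).
  auto_derive. apply ex_derive_besselJ.
  rewrite Rabs_pos_eq; nra.
Qed.

Lemma weighted_besselJ_sq_ge k Rr r :
  0 <= r -> 0 <= r * Rr <= 1 ->
  9 / 16 * ((Rr / 2) ^ k / INR (fact k)) ^ 2 * r ^ (2 * k + 1)
  <= r * besselJ k (r * Rr) ^ 2.
Proof.
  intros Hr Hz.
  set (lead := (r * Rr / 2) ^ k / INR (fact k)).
  assert (Hlead : 0 <= lead).
  { apply Rdiv_le_0_compat; [apply pow_le; lra|apply INR_fact_lt_0]. }
  assert (HJ : 3 / 4 * lead <= besselJ k (r * Rr)).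
  { eapply Rle_trans; [|apply besselJ_ge_leading; lra].
    apply Rmult_le_compat_r; [exact Hlead|]. simpl; nra. }
  replace (9 / 16 * ((Rr / 2) ^ k / INR (fact k)) ^ 2 * r ^ (2 * k + 1))
    with (r * (3 / 4 * lead) ^ 2).
  2:{ unfold lead. replace (2 * k + 1)%nat with (S (k + k)) by lia.
      replace (r * Rr / 2) with (r * (Rr / 2)) by field.
      rewrite (Rpow_mult_distr r (Rr / 2) k), <- (tech_pow_Rmult r), pow_add.
      field. apply INR_fact_neq_0. }
  apply Rmult_le_compat_l; [exact Hr|].
  apply pow_incr. nra.
Qed.

Definition bessel_mass (t : R) (n : nat) : R :=
  t ^ (2 * n) / (INR (n + 1) * 2 ^ (2 * n) * INR (fact n) ^ 2).

Lemma is_RInt_weighted_besselJ_minorant k Rr nu :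
  is_RInt (fun r => 9 / 16 * ((Rr / 2) ^ k / INR (fact k)) ^ 2 * r ^ (2 * k + 1))
    0 nu (9 * nu ^ 2 / 32 * bessel_mass (nu * Rr) k).
Proof.
  set (c := 9 / 16 * ((Rr / 2) ^ k / INR (fact k)) ^ 2).
  set (n := (2 * k + 1)%nat).
  assert (E : c * (nu ^ S n / INR (S n) - 0 ^ S n / INR (S n))
              = 9 * nu ^ 2 / 32 * bessel_mass (nu * Rr) k).
  { unfold c, n, bessel_mass.
    replace (INR (S (2 * k + 1))) with (2 * INR (k + 1))
      by (rewrite S_INR, !plus_INR, mult_INR; simpl; ring).
    replace (S (2 * k + 1)) with (k + k + 2)%nat by lia.
    replace (2 * k)%nat with (k + k)%nat by lia.
    rewrite (pow_i (k + k + 2)) by lia. unfold Rdiv.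
    rewrite !pow_add, !Rpow_mult_distr, pow_inv.
    field. repeat split;
      [apply INR_fact_neq_0|apply pow_nonzero; lra|apply not_0_INR; lia]. }
  rewrite <- E. apply (is_RInt_scal (fun r => r ^ n)), is_RInt_pow.
Qed.

Lemma bessel_mass_S k t :
  bessel_mass t (S k) = bessel_mass t k * (t ^ 2 / (4 * INR (k + 1) * INR (k + 2))).
Proof.
  unfold bessel_mass.
  replace (2 * S k)%nat with (2 * k + 2)%nat by lia.
  replace (S k + 1)%nat with (k + 2)%nat by lia.
  rewrite !pow_add, fact_simpl, mult_INR.
  replace (INR (S k)) with (INR (k + 1)) by (f_equal; lia).
  field. repeat split; try apply INR_fact_neq_0; try (apply not_0_INR; lia).
  apply pow_nonzero; lra.
Qed.

Lemma bessel_mass_decreasing t : 0 <= t <= 2 -> Un_decreasing (bessel_mass t).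
Proof.
  intros Ht k. rewrite bessel_mass_S.
  assert (Hm : 0 <= bessel_mass t k).
  { apply Rdiv_le_0_compat; [apply pow_le; lra|].
    apply Rmult_lt_0_compat; [apply Rmult_lt_0_compat|].
    - apply lt_0_INR; lia.
    - apply pow_lt; lra.
    - apply pow_lt, INR_fact_lt_0. }
  assert (H1 : 1 <= INR (k + 1)) by (apply (le_INR 1); lia).
  assert (H2 : 1 <= INR (k + 2)) by (apply (le_INR 1); lia).
  assert (Hq : t ^ 2 / (4 * INR (k + 1) * INR (k + 2)) <= 1).
  { assert (Hd : 0 < 4 * INR (k + 1) * INR (k + 2)) by nra.
    apply (Rdiv_le_1 _ _ Hd). simpl. nra. }
  rewrite <- (Rmult_1_r (bessel_mass t k)) at 2.
  apply Rmult_le_compat_l; assumption.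
Qed.

Theorem lemma8p2 (Rr nu : R) (k N : nat) :
  0 < Rr -> 0 < nu -> nu < 1 / Rr -> (k <= N)%nat ->
  RInt (fun r => r * (besselJ k (r * Rr)) ^ 2) 0 nu
  >= 9 * nu ^ 2 / 32 *
     ((nu * Rr) ^ (2 * N) / (INR (N + 1) * 2 ^ (2 * N) * (INR (fact N)) ^ 2)).
Proof.
  intros HR Hnu Hlt HkN.
  assert (HnR : nu * Rr < 1).
  { apply (Rmult_lt_compat_r Rr) in Hlt; [|exact HR].
    unfold Rdiv in Hlt. rewrite Rmult_1_l, Rinv_l in Hlt; lra. }
  apply Rle_ge.
  fold (bessel_mass (nu * Rr) N).
  apply Rle_trans with (9 * nu ^ 2 / 32 * bessel_mass (nu * Rr) k).
  { apply Rmult_le_compat_l; [pose proof (pow2_ge_0 nu); lra|].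
    apply decreasing_prop; [apply bessel_mass_decreasing; nra|exact HkN]. }
  rewrite <- (is_RInt_unique _ _ _ _ (is_RInt_weighted_besselJ_minorant k Rr nu)).
  apply RInt_le; [lra|eexists; apply is_RInt_weighted_besselJ_minorant| |].
  - apply ex_RInt_weighted_besselJ_sq; lra.
  - intros r Hr. apply weighted_besselJ_sq_ge; nra.
Qed.
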